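(* Assume Assumption 1 and Assumption 2 with $\delta>1/10$. For any distinct $u,u_1,u_2\in L$, as $n_L,n_R\to\infty$, $$\Pr[(u_1,u_2)\in E\mid S_L,S_R,\ (u,u_1)\in E,\ (u,u_2)\in E]=\frac{1}{1+\frac{M_{R2}^2}{M_{R3}M_{R1}}w_u}+o(1).$$
   Context: Model: left nodes $L$ ($|L|=n_L$), right nodes $R$ ($|R|=n_R$), weight sequences $S_L=(w_u)_{u\in L}$, $S_R=(w_v)_{v\in R}$ of positive reals; $M_{Lk}=\frac1{n_L}\sum_{u\in L}w_u^k$, $M_{Rk}=\frac1{n_R}\sum_{v\in R}w_v^k$. The random bipartite graph $G_b=(L\sqcup R,E_b)$ contains each edge $(u,v)$, $u\in L$, $v\in R$, independently with probability $\min\left(\frac{w_uw_v}{n_RM_{R1}},1\right)$. The projected graph is $G=(L,E)$ with $(u,u')\in E$ for distinct $u,u'\in L$ iff there is $z\in R$ with $(u,z),(u',z)\in E_b$. Assumption 1: $\frac{w_uw_v}{n_RM_{R1}}\le1$ for all $u\in L,v\in R$. Assumption 2 (parameter $\delta>0$), as $n_L,n_R\to\infty$: $\max(S_L\cup S_R)=O(n_R^{1/2-\delta})$, $\min S_L=\Omega(1)$, $M_{R2}=O(M_{R1}^2)$, $M_{R4}=O(n_R^{1-2\delta})$. *)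

From HB Require Import structures.
From mathcomp Require Import all_boot all_order all_algebra.
From mathcomp Require Import all_classical all_reals all_analysis.
Set Implicit Arguments. Unset Strict Implicit. Unset Printing Implicit Defensive.
Import Order.TTheory GRing.Theory Num.Theory.
Local Open Scope ring_scope.

Section Model.
Variable R : realType.

Definition moment (n : nat) (w : 'I_n -> R) (k : nat) : R :=
  (n%:R)^-1 * \sum_(i < n) w i ^+ k.

Definition edge_prob (nL nR : nat) (wL : 'I_nL -> R) (wR : 'I_nR -> R)
  (e : 'I_nL * 'I_nR) : R :=
  Num.min (wL e.1 * wR e.2 / (nR%:R * moment wR 1)) 1.

(* a realisation of the random bipartite graph G_b: the indicator of E_b *)
Definition config (nL nR : nat) := {ffun 'I_nL * 'I_nR -> bool}.

Definition config_weight (nL nR : nat) (wL : 'I_nL -> R) (wR : 'I_nR -> R)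
  (g : config nL nR) : R :=
  \prod_(e : 'I_nL * 'I_nR)
     (if g e then edge_prob wL wR e else 1 - edge_prob wL wR e).

Definition prob (nL nR : nat) (wL : 'I_nL -> R) (wR : 'I_nR -> R)
  (A : pred (config nL nR)) : R :=
  \sum_(g : config nL nR | A g) config_weight wL wR g.

Definition cond_prob (nL nR : nat) (wL : 'I_nL -> R) (wR : 'I_nR -> R)
  (A B : pred (config nL nR)) : R :=
  prob wL wR (predI A B) / prob wL wR B.

End Model.

(* edge of the projected graph G on L: distinct a, b with a common neighbour in R *)
Definition proj_edge (nL nR : nat) (g : config nL nR) (a b : 'I_nL) : bool :=
  (a != b) && [exists z : 'I_nR, g (a, z) && g (b, z)].

From HB Require Import structures.
From mathcomp Require Import all_boot all_order all_algebra.
From mathcomp Require Import all_classical all_reals all_analysis.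
From mathcomp Require Import ring lra.
Import Order.TTheory GRing.Theory Num.Theory.
Import numFieldNormedType.Exports.
Local Open Scope classical_set_scope.
Local Open Scope ring_scope.
Set Implicit Arguments. Unset Strict Implicit. Unset Printing Implicit Defensive.

(* Fix distinct left nodes u, u1, u2 and write p z, q z, r z for the
   probabilities of the bipartite edges (u, z), (u1, z), (u2, z); let
   alpha = sum p q, beta = sum p r, gamma = sum q r (expected numbers of
   common neighbours of the three pairs) and tau = sum p q r.
   1. Independence: an event constraining each right node z only through its
      column (g (u, z), g (u1, z), g (u2, z)) has probability a product over z.
      This gives exact formulas for the conditioning probability
      1 - prod (1 - p q) - prod (1 - p r) + prod (1 - p q - p r + p q r) and for
      the probability 1 - prod (1 - p q r) of a common neighbour of the triple.
   2. All three pairs are projected edges when the triple has a common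
      neighbour; otherwise distinct witnesses a, b, c serve the three pairs, and
      a union bound over them costs at most alpha beta gamma.
   3. Elementary product inequalities then show that the conditional
      probability is tau / (tau + alpha beta) up to 4 (alpha + beta + gamma + max p).
   4. Under Assumption 1, p = w_u w_z / (n_R M_R1), and tau / (tau + alpha beta)
      is exactly 1 / (1 + M_R2^2 / (M_R3 M_R1) w_u).
   5. Weights O(n_R^(1/2 - delta)) and M_R2 = O(M_R1^2) make every pair sum
      O(n_R^(-2 delta)); column probabilities are bounded by square roots of
      pair sums, so the error of step 3 vanishes. *)

Section FiniteSums.
Variable R : realType.

Lemma sum_indicator (T : finType) (F : T -> R) (t0 : T) :
  \sum_t F t * (t == t0)%:R = F t0.
Proof.
rewrite (bigD1 t0) //= eqxx mulr1 big1 ?addr0 // => t /negbTE ->; exact: mulr0.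
Qed.

Lemma prod_if_eq (T : finType) (a : T) (c : T -> R) :
  \prod_t (if t == a then c t else 1) = c a.
Proof. by rewrite (bigD1 a) //= eqxx big1 ?mulr1 // => t /negbTE ->. Qed.

Lemma sum_prod3 (A B C : finType) (F : A * B * C -> R) :
  \sum_t F t = \sum_(a : A) \sum_(b : B) \sum_(c : C) F (a, b, c).
Proof.
rewrite (pair_bigA _ (fun a b => \sum_c F (a, b, c))) /=.
rewrite [RHS](eq_bigr (fun ab => \sum_c F (ab, c))); last by case.
by rewrite (pair_bigA _ (fun ab c => F (ab, c))) /=; apply: eq_bigr => -[].
Qed.

Lemma sum_mul3 (A B C : finType) (f : A -> R) (g : B -> R) (h : C -> R) :
  \sum_(t : A * B * C) f t.1.1 * g t.1.2 * h t.2 =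
  (\sum_a f a) * (\sum_b g b) * (\sum_c h c).
Proof.
rewrite !mulr_suml sum_prod3; apply: eq_bigr => a _.
rewrite -mulrA mulr_suml mulr_sumr; apply: eq_bigr => b _.
by rewrite mulrA mulr_sumr.
Qed.

End FiniteSums.

Section Estimates.
Variable R : realType.

Lemma prod_one_minus (I : Type) (r : seq I) (x : I -> R) :
  (forall i, 0 <= x i <= 1) ->
  1 - \sum_(i <- r) x i <= \prod_(i <- r) (1 - x i) <=
  1 - \sum_(i <- r) x i + (\sum_(i <- r) x i) ^+ 2.
Proof.
move=> x01; elim: r => [|a r /andP[lo hi]]; first by rewrite !big_nil; lra.
have s0 : 0 <= \sum_(i <- r) x i by apply: sumr_ge0 => i _; case/andP: (x01 i).
rewrite !big_cons; have /andP[a0 a1] := x01 a.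
move: lo hi s0; set P := \prod_(i <- r) _; set s := \sum_(i <- r) _ => lo hi s0.
apply/andP; split; nra.
Qed.

Lemma prod_gap (I : Type) (r : seq I) (y y' : I -> R) :
  (forall i, 0 <= y' i <= y i) -> (forall i, y i <= 1) ->
  (\sum_(i <- r) (y i - y' i)) * \prod_(i <- r) y' i <=
    \prod_(i <- r) y i - \prod_(i <- r) y' i <= \sum_(i <- r) (y i - y' i).
Proof.
move=> hy' hy; elim: r => [|a r /andP[lo hi]]; first by rewrite !big_nil; lra.
have P'0 : 0 <= \prod_(i <- r) y' i by apply: prodr_ge0 => i _; case/andP: (hy' i).
have P'P : \prod_(i <- r) y' i <= \prod_(i <- r) y i by apply: ler_prod => i _; exact: hy'.
have P1 : \prod_(i <- r) y i <= 1.
  by apply: prodr_ile1 => i _; rewrite hy andbT; case/andP: (hy' i) => /le_trans; apply.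
rewrite !big_cons; have /andP[a0 a1] := hy' a; have a2 := hy a.
move: lo hi P'0 P'P P1; set P := \prod_(i <- r) y i; set P' := \prod_(i <- r) y' i.
set d := \sum_(i <- r) _ => lo hi P'0 P'P P1.
have -> : y a * P - y' a * P' = y a * (P - P') + (y a - y' a) * P' by ring.
apply/andP; split.
- have h1 : y' a * (d * P') <= y a * (P - P') by apply: ler_pM => //; nra.
  have h2 : (y a - y' a) * (y' a * P') <= (y a - y' a) * P'.
    by apply: ler_wpM2l; [lra | apply: ler_piMl; lra].
  nra.
- have h1 : y a * (P - P') <= d by apply: le_trans hi; apply: ler_piMl; lra.
  have h2 : (y a - y' a) * P' <= y a - y' a by apply: ler_piMr; lra.
  lra.
Qed.

Lemma ratio_close (N D t T e : R) :
  0 < T -> 0 <= t <= T -> 0 <= e <= 1 / 4 ->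
  `|N - t| <= e * T -> `|D - T| <= e * T -> `|N / D - t / T| <= 4 * e.
Proof.
move=> T0 /andP[t0 tT] /andP[e0 e1] hN hD.
have /ler_normlP[h1 h2] := hN; have /ler_normlP[h3 h4] := hD.
have D0 : 0 < D by nra.
have -> : N / D - t / T = ((N - t) * T - t * (D - T)) / (D * T) by field; lra.
rewrite normrM normfV (gtr0_norm (mulr_gt0 D0 T0)) ler_pdivrMr ?mulr_gt0 //.
apply: le_trans (ler_normB _ _) _; rewrite !normrM (gtr0_norm T0) (ger0_norm t0).
have k1 : `|N - t| * T <= e * T * T by apply: ler_wpM2r; lra.
have k2 : t * `|D - T| <= T * (e * T) by apply: ler_pM => //; exact: normr_ge0.
have eT0 : 0 <= e * T by apply: mulr_ge0; lra.
have k3 : e * T * ((1 - e) * T) <= e * T * D by apply: ler_wpM2l; lra.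
have k4 : e * (e * T * T) <= 1 / 4 * (e * T * T) by apply: ler_wpM2r; nra.
have -> : 4 * e * (D * T) = 4 * (e * T * D) by ring.
have : e * T * ((1 - e) * T) = e * T * T - e * (e * T * T) by ring.
nra.
Qed.

(* Algebraic core of the denominator estimate: X, Y are the probabilities of
   the complements of the two conditioning events, Z - X Y their correlation;
   then 1 - X - Y + Z is ta + al be up to a relative error e. *)
Lemma denominator_close (al be ta si m e X Y Z : R) :
  0 <= al -> 0 <= be -> 0 <= m -> 0 <= ta -> 0 <= si <= m * ta ->
  al + be + m <= e -> e <= 1 / 4 ->
  1 - al <= X <= 1 - al + al ^+ 2 -> 1 - be <= Y <= 1 - be + be ^+ 2 ->
  (ta - si) * (X * Y) <= Z - X * Y <= ta - si ->
  `|1 - X - Y + Z - (ta + al * be)| <= e * (ta + al * be).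
Proof.
move=> a0 b0 m0 t0 /andP[s0 sm] e_ge e_le /andP[X1 X2] /andP[Y1 Y2] /andP[De1 De2].
have A_ge : al - al ^+ 2 <= 1 - X by lra.
have B_ge : be - be ^+ 2 <= 1 - Y by lra.
have A0 : 0 <= al - al ^+ 2 by rewrite expr2 -{1}(mulr1 al) -mulrBr; apply: mulr_ge0; lra.
have B0 : 0 <= be - be ^+ 2 by rewrite expr2 -{1}(mulr1 be) -mulrBr; apply: mulr_ge0; lra.
have AB_hi : (1 - X) * (1 - Y) <= al * be by apply: ler_pM; lra.
have AB_lo : al * be * (1 - al - be) <= (1 - X) * (1 - Y).
  have : (al - al ^+ 2) * (be - be ^+ 2) <= (1 - X) * (1 - Y) by apply: ler_pM.
  have : 0 <= al * be * (al * be) by rewrite !mulr_ge0.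
  rewrite !expr2; nra.
have De_lo : ta * (1 - m - al - be) <= Z - X * Y.
  have XY : (1 - al) * (1 - be) <= X * Y by apply: ler_pM; lra.
  have tm0 : 0 <= ta * (1 - m) by apply: mulr_ge0; lra.
  have : ta * (1 - m) * (1 - al - be) <= (ta - si) * (X * Y) by apply: ler_pM; nra.
  have : 0 <= ta * m * (al + be) by rewrite !mulr_ge0 // addr_ge0.
  nra.
have -> : 1 - X - Y + Z = (1 - X) * (1 - Y) + (Z - X * Y) by ring.
have ab0 : 0 <= al * be by rewrite mulr_ge0.
apply/ler_normlP; split; nra.
Qed.

(* Algebraic core of the numerator estimate: N lies between the probability T
   of a common neighbour of the triple and T + al be ga. *)
Lemma numerator_close (al be ga ta e T N : R) :
  0 <= al -> 0 <= be -> 0 <= ta -> ta <= e -> ga <= e ->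
  ta - ta ^+ 2 <= T <= ta -> T <= N <= T + al * be * ga ->
  `|N - ta| <= e * (ta + al * be).
Proof.
move=> a0 b0 t0 te ge /andP[T1 T2] /andP[N1 N2].
have ab0 : 0 <= al * be by rewrite mulr_ge0.
have h1 : ta ^+ 2 <= e * ta by rewrite expr2 ler_wpM2r.
have h2 : al * be * ga <= al * be * e by rewrite ler_wpM2l.
apply/ler_normlP; split; nra.
Qed.

End Estimates.

Section RandomGraph.
Variables (R : realType) (nL nR : nat) (wL : 'I_nL -> R) (wR : 'I_nR -> R).
Implicit Types (g : config nL nR) (e : 'I_nL * 'I_nR) (z : 'I_nR).

Definition edge_law e (b : bool) : R :=
  if b then edge_prob wL wR e else 1 - edge_prob wL wR e.

Lemma edge_law_sum e : edge_law e true + edge_law e false = 1.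
Proof. by rewrite /edge_law addrC subrK. Qed.

Lemma expect_edge_prod (h : 'I_nL * 'I_nR -> bool -> R) :
  \sum_g config_weight wL wR g * \prod_e h e (g e) =
  \prod_e \sum_b edge_law e b * h e b.
Proof.
rewrite (bigA_distr_bigA (fun e b => edge_law e b * h e b)) /=.
apply: eq_bigr => g _; rewrite /config_weight -big_split /=.
by apply: eq_bigr => e _; rewrite /edge_law; case: (g e).
Qed.

Lemma prob_sum (P : pred (config nL nR)) :
  prob wL wR P = \sum_g config_weight wL wR g * (P g)%:R.
Proof.
rewrite /prob [RHS](bigID P) /= [X in _ + X]big1 ?addr0.
  by apply: eq_bigr => g ->; rewrite mulr1.
by move=> g /negbTE ->; rewrite mulr0.
Qed.

Lemma prob_total : prob wL wR predT = 1.
Proof.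
rewrite prob_sum; transitivity (\prod_e \sum_b edge_law e b * 1).
  by rewrite -expect_edge_prod; apply: eq_bigr => g _; rewrite big1.
by rewrite big1 // => e _; rewrite big_bool !mulr1 /= edge_law_sum.
Qed.

Lemma prob_compl (P : pred (config nL nR)) : prob wL wR P = 1 - prob wL wR (predC P).
Proof.
rewrite -prob_total !prob_sum -sumrB; apply: eq_bigr => g _ /=.
by case: (P g) => /=; ring.
Qed.

Lemma prob_split (P Q : pred (config nL nR)) :
  prob wL wR P = prob wL wR (predI P Q) + prob wL wR (predI P (predC Q)).
Proof.
rewrite !prob_sum -big_split /=; apply: eq_bigr => g _.
by case: (P g); case: (Q g) => /=; ring.
Qed.

Lemma prob_and (P Q : pred (config nL nR)) :
  prob wL wR (predI P Q) =
  1 - prob wL wR (predC P) - prob wL wR (predC Q) + prob wL wR (predI (predC P) (predC Q)).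
Proof.
rewrite -prob_total !prob_sum -!sumrB -big_split /=; apply: eq_bigr => g _.
by case: (P g); case: (Q g) => /=; ring.
Qed.

Definition shared (a b : 'I_nL) g := [exists z, g (a, z) && g (b, z)].

Lemma proj_edgeE g (a b : 'I_nL) : a != b -> proj_edge g a b = shared a b g.
Proof. by rewrite /proj_edge => ->. Qed.

Hypotheses (wL_ge0 : forall i, 0 <= wL i) (wR_ge0 : forall j, 0 <= wR j).

Lemma edge_prob01 e : 0 <= edge_prob wL wR e <= 1.
Proof.
rewrite /edge_prob ge_min lexx orbT andbT le_min ler01 andbT.
apply: divr_ge0; first exact: mulr_ge0.
by rewrite !mulr_ge0 // sumr_ge0 // => i _; rewrite expr1.
Qed.

Lemma config_weight_ge0 g : 0 <= config_weight wL wR g.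
Proof.
apply: prodr_ge0 => e _; have /andP[p0 p1] := edge_prob01 e.
by case: (g e); rewrite // subr_ge0.
Qed.

Lemma prob_le (P Q : pred (config nL nR)) : (forall g, P g -> Q g) ->
  prob wL wR P <= prob wL wR Q.
Proof.
move=> PQ; rewrite !prob_sum; apply: ler_sum => g _.
apply: ler_wpM2l; first exact: config_weight_ge0.
by case: (boolP (P g)) => [/PQ -> | _] //=; case: (Q g).
Qed.

Lemma union_bound (I : finType) (P : pred (config nL nR)) (Q : I -> pred (config nL nR)) :
  (forall g, P g -> exists i, Q i g) -> prob wL wR P <= \sum_i prob wL wR (Q i).
Proof.
move=> PQ; rewrite prob_sum.
under [X in _ <= X]eq_bigr do rewrite prob_sum.
rewrite exchange_big /=; apply: ler_sum => g _.
rewrite -big_distrr /=; apply: ler_wpM2l; first exact: config_weight_ge0.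
have Q_ge0 : 0 <= \sum_i (Q i g)%:R :> R by apply: sumr_ge0 => i _.
case: (boolP (P g)) => [Pg | _] //; have [i Qi] := PQ g Pg.
by rewrite (bigD1 i) //= Qi -[X in X <= _]addr0 lerD2l sumr_ge0.
Qed.

Variables (u u1 u2 : 'I_nL).
Hypotheses (hu1 : u != u1) (hu2 : u != u2) (hu12 : u1 != u2).

(* Everything needed about a realisation is seen through its columns
   z |-> (g (u, z), g (u1, z), g (u2, z)), which are independent in z. *)
Definition triple := (bool * bool * bool)%type.
Implicit Types (t : triple).

Definition column g z : triple := (g (u, z), g (u1, z), g (u2, z)).

Definition triple_law z t : R :=
  edge_law (u, z) t.1.1 * edge_law (u1, z) t.1.2 * edge_law (u2, z) t.2.

Definition vertex_match (i : 'I_nL) t (b : bool) : R :=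
  (if i == u then (b == t.1.1)%:R else 1) * (if i == u1 then (b == t.1.2)%:R else 1)
  * (if i == u2 then (b == t.2)%:R else 1).

Let distinct_vertices :=
  (negbTE hu1, negbTE hu2, negbTE hu12, eq_sym u1 u, eq_sym u2 u, eq_sym u2 u1, eqxx).

Lemma prod_three (h : 'I_nL -> R) :
  (forall i, i != u -> i != u1 -> i != u2 -> h i = 1) ->
  \prod_i h i = h u * h u1 * h u2.
Proof.
move=> h1; rewrite (bigD1 u) //= (bigD1 u1) /=; last by rewrite eq_sym hu1.
rewrite (bigD1 u2) /=; last by rewrite !distinct_vertices.
rewrite big1 ?mulr1 ?mulrA // => i /andP[/andP[iu iu1] iu2]; exact: h1.
Qed.

Lemma vertex_match_other i t b : i != u -> i != u1 -> i != u2 -> vertex_match i t b = 1.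
Proof. by rewrite /vertex_match => /negbTE-> /negbTE-> /negbTE->; rewrite !mulr1. Qed.

Lemma column_indicator g z t :
  (t == column g z)%:R = \prod_i vertex_match i t (g (i, z)).
Proof.
rewrite prod_three => [|i]; last exact: vertex_match_other.
rewrite /vertex_match !distinct_vertices !mulr1 !mul1r.
case: t => [[x y] w]; rewrite /column !xpair_eqE.
by case: x; case: y; case: w; case: (g (u, z)); case: (g (u1, z)); case: (g (u2, z));
  rewrite /= ?mulr1 ?mulr0.
Qed.

Lemma column_law z t :
  \prod_i \sum_b edge_law (i, z) b * vertex_match i t b = triple_law z t.
Proof.
rewrite prod_three => [|i iu iu1 iu2]; last first.
  by rewrite big_bool /= !vertex_match_other // !mulr1 edge_law_sum.
rewrite !big_bool /vertex_match /triple_law !distinct_vertices !mulr1 !mul1r.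
by case: t => [[x y] w]; case: x; case: y; case: w; rewrite /= ?mulr0 ?mulr1 ?addr0 ?add0r.
Qed.

(* The column indicators are
   expanded into per-edge factors, to which [expect_edge_prod] applies. *)
Lemma expect_column_prod (F : 'I_nR -> triple -> R) :
  \sum_g config_weight wL wR g * \prod_z F z (column g z) =
  \prod_z \sum_t F z t * triple_law z t.
Proof.
have expand g : \prod_z F z (column g z) = \sum_(c : {ffun 'I_nR -> triple})
    (\prod_z F z (c z)) * \prod_e vertex_match e.1 (c e.2) (g e).
  transitivity (\prod_z \sum_t F z t * (t == column g z)%:R).
    by apply: eq_bigr => z _; rewrite sum_indicator.
  rewrite bigA_distr_bigA /=; apply: eq_bigr => c _; rewrite big_split /=; congr (_ * _).
  transitivity (\prod_e vertex_match e.1 (c e.2) (g (e.1, e.2))); last by apply: eq_bigr => -[].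
  rewrite -(pair_bigA _ (fun i z => vertex_match i (c z) (g (i, z)))) /= exchange_big /=.
  by apply: eq_bigr => z _; rewrite column_indicator.
rewrite (eq_bigr _ (fun g _ => congr1 (GRing.mul (config_weight wL wR g)) (expand g))) /=.
under eq_bigr do rewrite big_distrr /=.
rewrite exchange_big /= (bigA_distr_bigA (fun z t => F z t * triple_law z t)) /=.
apply: eq_bigr => c _; under eq_bigr do rewrite mulrCA.
rewrite -big_distrr /= (expect_edge_prod (fun e b => vertex_match e.1 (c e.2) b)).
rewrite big_split /=; congr (_ * _).
rewrite -(pair_bigA _ (fun i z => \sum_b edge_law (i, z) b * vertex_match i (c z) b)) /=.
by rewrite exchange_big /=; apply: eq_bigr => z _; rewrite column_law.
Qed.

Lemma prob_columnwise (P : pred (config nL nR)) (phi : 'I_nR -> triple -> bool) :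
  (forall g, P g = [forall z, phi z (column g z)]) ->
  prob wL wR P = \prod_z \sum_t (phi z t)%:R * triple_law z t.
Proof.
move=> hP; rewrite prob_sum -expect_column_prod; apply: eq_bigr => g _.
rewrite hP; congr (_ * _); case: (boolP [forall z, _]) => [/forallP h | /forallPn [z hz]].
  by rewrite big1 // => z _; rewrite h.
by rewrite (bigD1 z) //= (negbTE hz) mul0r.
Qed.

Definition pu z := edge_prob wL wR (u, z).
Definition pu1 z := edge_prob wL wR (u1, z).
Definition pu2 z := edge_prob wL wR (u2, z).

Lemma pu_ge0 z : [/\ 0 <= pu z, 0 <= pu1 z & 0 <= pu2 z].
Proof.
have p0 e : 0 <= edge_prob wL wR e by case/andP: (edge_prob01 e).
by split; apply: p0.
Qed.

Definition shared3 g := [exists z, [&& g (u, z), g (u1, z) & g (u2, z)]].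

Local Ltac column_sum :=
  rewrite sum_prod3 !big_bool /triple_law /edge_law /pu /pu1 /pu2 /=; ring.

(* The complements of the two conditioning events and their intersection
   constrain each column separately. *)
Lemma prob_not_shared_u1 : prob wL wR (predC (shared u u1)) = \prod_z (1 - pu z * pu1 z).
Proof.
rewrite (@prob_columnwise _ (fun _ t => ~~ (t.1.1 && t.1.2))); last first.
  by move=> g; rewrite /= /shared negb_exists.
by apply: eq_bigr => z _; column_sum.
Qed.

Lemma prob_not_shared_u2 : prob wL wR (predC (shared u u2)) = \prod_z (1 - pu z * pu2 z).
Proof.
rewrite (@prob_columnwise _ (fun _ t => ~~ (t.1.1 && t.2))); last first.
  by move=> g; rewrite /= /shared negb_exists.
by apply: eq_bigr => z _; column_sum.
Qed.

Lemma prob_not_shared_both :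
  prob wL wR (predI (predC (shared u u1)) (predC (shared u u2))) =
  \prod_z (1 - pu z * pu1 z - pu z * pu2 z + pu z * pu1 z * pu2 z).
Proof.
rewrite (@prob_columnwise _ (fun _ t => ~~ (t.1.1 && t.1.2) && ~~ (t.1.1 && t.2))); last first.
  move=> g; rewrite /= /shared !negb_exists; apply/andP/forallP.
    by case=> /forallP h1 /forallP h2 z; rewrite h1 h2.
  by move=> h; split; apply/forallP => z; case/andP: (h z).
by apply: eq_bigr => z _; column_sum.
Qed.

Lemma prob_shared_both :
  prob wL wR (predI (shared u u1) (shared u u2)) =
  1 - \prod_z (1 - pu z * pu1 z) - \prod_z (1 - pu z * pu2 z) +
  \prod_z (1 - pu z * pu1 z - pu z * pu2 z + pu z * pu1 z * pu2 z).
Proof. by rewrite prob_and prob_not_shared_u1 prob_not_shared_u2 prob_not_shared_both. Qed.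

Lemma prob_shared3 : prob wL wR shared3 = 1 - \prod_z (1 - pu z * pu1 z * pu2 z).
Proof.
rewrite prob_compl (@prob_columnwise _ (fun _ t => ~~ [&& t.1.1, t.1.2 & t.2])).
  by congr (_ - _); apply: eq_bigr => z _; column_sum.
by move=> g; rewrite /= /shared3 negb_exists.
Qed.

(* Witnesses for the event that all three pairs share a neighbour while the
   triple does not: pairwise distinct right nodes a, b, c such that a is a
   common neighbour of u and u1, b of u and u2, and c of u1 and u2. *)
Definition witness_column (abc : 'I_nR * 'I_nR * 'I_nR) z t : bool :=
  [&& (z == abc.1.1) ==> (t.1.1 && t.1.2), (z == abc.1.2) ==> (t.1.1 && t.2)
    & (z == abc.2) ==> (t.1.2 && t.2)].

Definition witness (abc : 'I_nR * 'I_nR * 'I_nR) g : bool :=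
  [&& abc.1.1 != abc.1.2, abc.1.1 != abc.2, abc.1.2 != abc.2 &
      [forall z, witness_column abc z (column g z)]].

(* The six edges of a witness lie in three distinct columns. *)
Lemma prob_witness a b c : prob wL wR (witness (a, b, c)) <=
  pu a * pu1 a * (pu b * pu2 b) * (pu1 c * pu2 c).
Proof.
case: (boolP [&& a != b, a != c & b != c]) => [/and3P[ab ac bc] | degenerate]; last first.
  rewrite (_ : prob wL wR _ = 0).
    by have [? ? ?] := pu_ge0 a; have [? ? ?] := pu_ge0 b; have [? ? ?] := pu_ge0 c;
      rewrite !mulr_ge0.
  rewrite prob_sum big1 // => g _; move: degenerate; rewrite /witness /=.
  by case: (a != b); case: (a != c); case: (b != c); rewrite /= ?mulr0.
rewrite (@prob_columnwise _ (witness_column (a, b, c))); last first.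
  by move=> g; rewrite /witness /= ab ac bc.
rewrite (eq_bigr (fun z => (if z == a then pu z * pu1 z else 1) *
   (if z == b then pu z * pu2 z else 1) * (if z == c then pu1 z * pu2 z else 1))).
  by rewrite !big_split /= !prod_if_eq.
move=> z _; rewrite /witness_column /=.
have [-> | za] := eqVneq z a; last have [-> | zb] := eqVneq z b;
  last have [-> | zc] := eqVneq z c.
all: by rewrite ?(negbTE ab) ?(negbTE ac) ?(negbTE bc); column_sum.
Qed.

Definition all_pairs_shared g := [&& shared u1 u2 g, shared u u1 g & shared u u2 g].

Lemma shared3_le_all_pairs : prob wL wR shared3 <= prob wL wR all_pairs_shared.
Proof.
apply: prob_le => g /existsP [z /and3P[gu gu1 gu2]].
by apply/and3P; split; apply/existsP; exists z; rewrite ?gu ?gu1 ?gu2.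
Qed.

Lemma witness_of_all_pairs g :
  all_pairs_shared g -> ~~ shared3 g -> exists abc, witness abc g.
Proof.
move=> /and3P[/existsP[c /andP[c1 c2]] /existsP[a /andP[a0 a1]] /existsP[b /andP[b0 b2]]].
move=> no3; exists (a, b, c).
have not_all z : g (u, z) -> g (u1, z) -> g (u2, z) -> False.
  by move=> x y w; move/negP: no3; apply; apply/existsP; exists z; rewrite x y w.
rewrite /witness /=; apply/and4P; split.
- by apply/negP => /eqP ab; subst b; exact: (not_all a).
- by apply/negP => /eqP ac; subst c; exact: (not_all a).
- by apply/negP => /eqP bc; subst c; exact: (not_all b).
apply/forallP => z; rewrite /witness_column /=.
by apply/and3P; split; apply/implyP => /eqP ->; rewrite /column /= ?a0 ?a1 ?b0 ?b2 ?c1 ?c2.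
Qed.

(* Union bound over witnesses: besides a common neighbour of the triple, the
   three pairs share neighbours with probability at most alpha beta gamma. *)
Lemma all_pairs_le_shared3 : prob wL wR all_pairs_shared <= prob wL wR shared3 +
  (\sum_z pu z * pu1 z) * (\sum_z pu z * pu2 z) * (\sum_z pu1 z * pu2 z).
Proof.
rewrite (prob_split _ shared3); apply: lerD.
  by apply: prob_le => g /andP[].
apply: le_trans (union_bound (Q := witness) _) _.
  by move=> g /andP[]; exact: witness_of_all_pairs.
rewrite -sum_mul3; apply: ler_sum => -[[a b] c] _; exact: prob_witness.
Qed.

End RandomGraph.

(* The estimates at a fixed size, for column probabilities p (at u), q (at u1)
   and r (at u2) indexed by an arbitrary finite set of right nodes, with every
   p z at most m. *)
Section ColumnEstimates.
Variables (R : realType) (I : finType) (p q r : I -> R) (m : R).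
Hypotheses (p01 : forall z, 0 <= p z <= 1) (q01 : forall z, 0 <= q z <= 1)
  (r01 : forall z, 0 <= r z <= 1) (m_ge0 : 0 <= m) (p_le_m : forall z, p z <= m).

Local Notation alpha := (\sum_z p z * q z).
Local Notation beta := (\sum_z p z * r z).
Local Notation gamma := (\sum_z q z * r z).
Local Notation tau := (\sum_z p z * q z * r z).
Local Notation sigma := (\sum_z p z * (p z * q z * r z)).
Local Notation err := (alpha + beta + gamma + m).
(* Probabilities that u has no common neighbour with u1, with u2, with either. *)
Local Notation avoid_q := (\prod_z (1 - p z * q z)).
Local Notation avoid_r := (\prod_z (1 - p z * r z)).
Local Notation avoid_qr := (\prod_z (1 - p z * q z - p z * r z + p z * q z * r z)).

Lemma column_products01 z :
  [/\ 0 <= p z * q z <= 1, 0 <= p z * r z <= 1, 0 <= q z * r z <= 1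
    & 0 <= p z * q z * r z <= 1].
Proof.
have /andP[? ?] := p01 z; have /andP[? ?] := q01 z; have /andP[? ?] := r01 z.
have pq0 : 0 <= p z * q z by rewrite mulr_ge0.
have pq1 : p z * q z <= 1 by rewrite mulr_ile1.
by split; apply/andP; split; rewrite ?mulr_ge0 // mulr_ile1.
Qed.

Lemma sums_ge0 : [/\ 0 <= alpha, 0 <= beta, 0 <= gamma & 0 <= tau].
Proof.
by split; apply: sumr_ge0 => z _; case: (column_products01 z)
  => /andP[? _] /andP[? _] /andP[? _] /andP[? _].
Qed.

(* A common neighbour of the triple is one of (u1, u2) that is moreover
   adjacent to u; similarly for the correction term sigma. *)
Lemma tau_le : tau <= m * gamma.
Proof.
rewrite mulr_sumr; apply: ler_sum => z _; rewrite -mulrA.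
by apply: ler_wpM2r; [case: (column_products01 z) => _ _ /andP[] | exact: p_le_m].
Qed.

Lemma sigma_bounds : 0 <= sigma <= m * tau.
Proof.
apply/andP; split.
  apply: sumr_ge0 => z _; have /andP[? _] := p01 z.
  by case: (column_products01 z) => _ _ _ /andP[? _]; rewrite mulr_ge0.
rewrite mulr_sumr; apply: ler_sum => z _.
by apply: ler_wpM2r; [case: (column_products01 z) => _ _ _ /andP[] | exact: p_le_m].
Qed.

(* The two conditioning events are positively correlated, by tau - sigma up
   to a factor avoid_q avoid_r. *)
Lemma correlation_bounds :
  (tau - sigma) * (avoid_q * avoid_r) <= avoid_qr - avoid_q * avoid_r <= tau - sigma.
Proof.
have factors z : 0 <= (1 - p z * q z) * (1 - p z * r z) <=
    1 - p z * q z - p z * r z + p z * q z * r z.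
  have /andP[? ?] := p01 z; have [/andP[? ?] /andP[? ?] _ /andP[? ?]] := column_products01 z.
  apply/andP; split; first by rewrite mulr_ge0 // subr_ge0.
  have : 0 <= p z * q z * r z * (1 - p z) by rewrite mulr_ge0 // subr_ge0.
  nra.
have factor_le1 z : 1 - p z * q z - p z * r z + p z * q z * r z <= 1.
  have /andP[? ?] := q01 z; have [/andP[? ?] /andP[? ?] _ _] := column_products01 z.
  have : 0 <= p z * r z * (1 - q z) by rewrite mulr_ge0 // subr_ge0.
  nra.
have gapE : \sum_z (1 - p z * q z - p z * r z + p z * q z * r z -
                     (1 - p z * q z) * (1 - p z * r z)) = tau - sigma.
  by rewrite -sumrB; apply: eq_bigr => z _; ring.
by move: (prod_gap (index_enum I) factors factor_le1) => /=; rewrite gapE big_split.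
Qed.

Hypothesis err_small : err <= 1 / 4.

Lemma cond_denominator_close :
  `|1 - avoid_q - avoid_r + avoid_qr - (tau + alpha * beta)| <= err * (tau + alpha * beta).
Proof.
have pq01 z : 0 <= p z * q z <= 1 by case: (column_products01 z).
have pr01 z : 0 <= p z * r z <= 1 by case: (column_products01 z).
have [a0 b0 g0 t0] := sums_ge0.
have e_small := err_small; have m0 := m_ge0.
apply: denominator_close sigma_bounds _ e_small
  (prod_one_minus _ pq01) (prod_one_minus _ pr01) correlation_bounds => //.
lra.
Qed.

Lemma cond_numerator_close (N : R) :
  1 - \prod_z (1 - p z * q z * r z) <= N <=
    1 - \prod_z (1 - p z * q z * r z) + alpha * beta * gamma ->
  `|N - tau| <= err * (tau + alpha * beta).
Proof.
have pqr01 z : 0 <= p z * q z * r z <= 1 by case: (column_products01 z).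
move: (prod_one_minus (index_enum I) pqr01) => /= /andP[T1 T2] hN.
have [a0 b0 g0 t0] := sums_ge0.
have e_small := err_small; have m0 := m_ge0.
have t_le : tau <= gamma by apply: le_trans tau_le _; apply: ler_piMl => //; lra.
by apply: numerator_close hN => //; [lra | lra | apply/andP; split; lra].
Qed.

Lemma cond_ratio_close (N : R) : 0 < tau ->
  1 - \prod_z (1 - p z * q z * r z) <= N <=
    1 - \prod_z (1 - p z * q z * r z) + alpha * beta * gamma ->
  `|N / (1 - avoid_q - avoid_r + avoid_qr) - tau / (tau + alpha * beta)| <= 4 * err.
Proof.
move=> t0 hN; have [a0 b0 g0 _] := sums_ge0.
have e_small := err_small; have m0 := m_ge0.
have ab0 : 0 <= alpha * beta by rewrite mulr_ge0.
apply: ratio_close (cond_numerator_close hN) cond_denominator_close.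
- lra.
- by apply/andP; split; lra.
- by apply/andP; split; lra.
Qed.

End ColumnEstimates.

Section FixedSize.
Variables (R : realType) (nL nR : nat) (wL : 'I_nL -> R) (wR : 'I_nR -> R).
Hypotheses (nR_gt0 : (0 < nR)%N) (wL_gt0 : forall i, 0 < wL i) (wR_gt0 : forall j, 0 < wR j).
Hypothesis assumption1 : forall i j, wL i * wR j / (nR%:R * moment wR 1) <= 1.

Definition power_sum k := \sum_z wR z ^+ k.

Lemma power_sum_gt0 k : 0 < power_sum k.
Proof.
rewrite /power_sum (bigD1 (Ordinal nR_gt0)) //=; apply: ltr_wpDr; last exact: exprn_gt0.
by apply: sumr_ge0 => z _; apply/exprn_ge0/ltW.
Qed.

Lemma momentE k : moment wR k = nR%:R^-1 * power_sum k.
Proof. by []. Qed.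

(* Assumption 1 removes the truncation at 1 in the edge probabilities. *)
Lemma edge_probE (v : 'I_nL) z : edge_prob wL wR (v, z) = wL v * wR z / power_sum 1.
Proof.
have n0 : nR%:R != 0 :> R by rewrite pnatr_eq0 -lt0n.
rewrite /edge_prob /= min_l; last exact: assumption1.
by rewrite momentE mulrA mulfV ?mul1r.
Qed.

Lemma pair_sumE (v v' : 'I_nL) :
  \sum_z edge_prob wL wR (v, z) * edge_prob wL wR (v', z) =
  wL v * wL v' * power_sum 2 / power_sum 1 ^+ 2.
Proof.
have s0 := lt0r_neq0 (power_sum_gt0 1).
rewrite [power_sum 2]/power_sum mulrC mulrA mulr_sumr; apply: eq_bigr => z _.
by rewrite !edge_probE; field.
Qed.

Lemma power_sum_ratio_le (C : R) : moment wR 2 <= C * moment wR 1 ^+ 2 ->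
  power_sum 2 / power_sum 1 ^+ 2 <= C / nR%:R.
Proof.
have n0 : 0 < nR%:R :> R by rewrite ltr0n.
have s1 := power_sum_gt0 1.
rewrite !momentE => h.
have -> : power_sum 2 / power_sum 1 ^+ 2 =
          nR%:R^-1 * power_sum 2 * (nR%:R / power_sum 1 ^+ 2).
  by field; rewrite !lt0r_neq0.
have -> : C / nR%:R = C * (nR%:R^-1 * power_sum 1) ^+ 2 * (nR%:R / power_sum 1 ^+ 2).
  by field; rewrite !lt0r_neq0.
by rewrite ler_wpM2r // divr_ge0 ?exprn_ge0 ?ltW.
Qed.

Lemma edge_prob_le_pair_sum (v : 'I_nL) z (eta : R) : 0 <= eta ->
  \sum_z' edge_prob wL wR (v, z') * edge_prob wL wR (v, z') <= eta ^+ 2 ->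
  edge_prob wL wR (v, z) <= eta.
Proof.
move=> eta0 hv; have p0 z' : 0 <= edge_prob wL wR (v, z').
  by rewrite edge_probE divr_ge0 ?mulr_ge0 ?ltW ?power_sum_gt0.
have : edge_prob wL wR (v, z) ^+ 2 <= eta ^+ 2.
  apply: le_trans hv; rewrite expr2 (bigD1 z) //= lerDl.
  by apply: sumr_ge0 => z' _; rewrite mulr_ge0.
by rewrite ler_pXn2r // ?nnegrE.
Qed.

Variables (u u1 u2 : 'I_nL).
Hypotheses (hu1 : u != u1) (hu2 : u != u2) (hu12 : u1 != u2).

Local Notation p := (pu wL wR u).
Local Notation q := (pu1 wL wR u1).
Local Notation r := (pu2 wL wR u2).
Local Notation alpha := (\sum_z p z * q z).
Local Notation beta := (\sum_z p z * r z).
Local Notation tau := (\sum_z p z * q z * r z).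

Lemma tauE : tau = wL u * wL u1 * wL u2 * power_sum 3 / power_sum 1 ^+ 3.
Proof.
have s0 := lt0r_neq0 (power_sum_gt0 1).
rewrite [power_sum 3]/power_sum mulrC mulrA mulr_sumr; apply: eq_bigr => z _.
by rewrite /pu /pu1 /pu2 !edge_probE; field.
Qed.

Lemma limit_valueE :
  (1 + moment wR 2 ^+ 2 / (moment wR 3 * moment wR 1) * wL u)^-1 = tau / (tau + alpha * beta).
Proof.
rewrite tauE /pu /pu1 /pu2 !pair_sumE !momentE.
have s1 := power_sum_gt0 1; have s2 := power_sum_gt0 2; have s3 := power_sum_gt0 3.
have a := wL_gt0 u; have b := wL_gt0 u1; have c := wL_gt0 u2.
have n0 : 0 < nR%:R :> R by rewrite ltr0n.
have -> : (nR%:R^-1 * power_sum 2) ^+ 2 / (nR%:R^-1 * power_sum 3 * (nR%:R^-1 * power_sum 1)) =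
          power_sum 2 ^+ 2 / (power_sum 3 * power_sum 1).
  by field; rewrite !lt0r_neq0.
by field; rewrite !lt0r_neq0 // ?addr_gt0 ?mulr_gt0 ?exprn_gt0.
Qed.

Lemma cond_probE :
  cond_prob wL wR (fun g => proj_edge g u1 u2)
    (fun g => proj_edge g u u1 && proj_edge g u u2) =
  prob wL wR (all_pairs_shared u u1 u2) / prob wL wR (predI (shared u u1) (shared u u2)).
Proof.
by rewrite /cond_prob /prob; congr (_ / _); apply: eq_bigl => g; rewrite /= !proj_edgeE.
Qed.

Lemma fixed_size_bound (eta : R) : 0 < eta -> eta <= 1 / 8 ->
  (forall v v' : 'I_nL, \sum_z edge_prob wL wR (v, z) * edge_prob wL wR (v', z) <= eta ^+ 2) ->
  `|cond_prob wL wR (fun g => proj_edge g u1 u2)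
       (fun g => proj_edge g u u1 && proj_edge g u u2)
    - (1 + moment wR 2 ^+ 2 / (moment wR 3 * moment wR 1) * wL u)^-1| <= 6 * eta.
Proof.
move=> eta0 eta_le pair_small.
have p_le z : p z <= eta by apply: edge_prob_le_pair_sum; [exact: ltW | exact: pair_small].
have ha : alpha <= eta ^+ 2 := pair_small u u1.
have hb : beta <= eta ^+ 2 := pair_small u u2.
have hc : \sum_z q z * r z <= eta ^+ 2 := pair_small u1 u2.
have tau0 : 0 < tau by rewrite tauE divr_gt0 ?exprn_gt0 ?mulr_gt0 ?power_sum_gt0 ?wL_gt0.
have eta2 : eta ^+ 2 <= eta / 8 by rewrite expr2; nra.
have wL_ge0 := fun i => ltW (wL_gt0 i); have wR_ge0 := fun j => ltW (wR_gt0 j).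
have p01 v z : 0 <= edge_prob wL wR (v, z) <= 1 by exact: edge_prob01.
rewrite cond_probE limit_valueE prob_shared_both //.
apply: le_trans (cond_ratio_close (p01 u) (p01 u1) (p01 u2) (ltW eta0) p_le _ tau0 _) _.
- lra.
- rewrite -prob_shared3 //; apply/andP; split.
    exact: shared3_le_all_pairs.
  exact: all_pairs_le_shared3.
- lra.
Qed.

End FixedSize.

Section Decay.
Variable R : realType.

Lemma rho_sq (n d : R) : 0 < n -> (n `^ (1 / 2 - d)) ^+ 2 / n = (n `^ (2 * d))^-1.
Proof.
move=> n0; rewrite -powR_mulrn ?powR_ge0 // -powRrM.
rewrite (_ : (1 / 2 - d) * 2%:R = 1 + - (2 * d)); last by rewrite mulrBl; field.
rewrite powRD; last by rewrite (lt0r_neq0 n0) implybT.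
rewrite powRr1 ?ltW // powRN; field.
by apply/andP; split; apply: lt0r_neq0; [apply: powR_gt0|].
Qed.

Lemma powR_unbounded (d Q : R) : 0 < d -> 0 < Q ->
  exists M : nat, forall n : nat, (M <= n)%N -> Q <= n%:R `^ d.
Proof.
move=> d0 Q0; set X := Q `^ d^-1.
have X0 : 0 <= X by exact: powR_ge0.
exists (Num.Def.archi_bound X) => n hn.
have hX : X <= n%:R by apply: le_trans (ltW (archi_boundP X0)) _; rewrite ler_nat.
have : X `^ d <= n%:R `^ d by apply: ge0_ler_powR => //; rewrite ?nnegrE ?ler0n //; apply: ltW.
by rewrite /X -powRrM mulVf ?(lt0r_neq0 d0) // powRr1 // ltW.
Qed.

Lemma pair_sum_decay (nL nR : nat) (wL : 'I_nL -> R) (wR : 'I_nR -> R) (delta C C2 : R) :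
  (0 < nR)%N -> (forall i, 0 < wL i) -> (forall j, 0 < wR j) ->
  (forall i j, wL i * wR j / (nR%:R * moment wR 1) <= 1) ->
  (forall i, wL i <= C * nR%:R `^ (1 / 2 - delta)) ->
  moment wR 2 <= C2 * moment wR 1 ^+ 2 ->
  forall v v' : 'I_nL, \sum_z edge_prob wL wR (v, z) * edge_prob wL wR (v', z) <=
    C ^+ 2 * C2 / nR%:R `^ (2 * delta).
Proof.
move=> n_pos wL_gt0 wR_gt0 assumption1 max_wL second_moment v v'.
have n0 : 0 < nR%:R :> R by rewrite ltr0n.
have ww : wL v * wL v' <= (C * nR%:R `^ (1 / 2 - delta)) ^+ 2.
  by rewrite expr2; apply: ler_pM; rewrite ?max_wL // ltW.
have -> : C ^+ 2 * C2 / nR%:R `^ (2 * delta) =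
          (C * nR%:R `^ (1 / 2 - delta)) ^+ 2 * (C2 / nR%:R).
  by rewrite exprMn -rho_sq //; field; rewrite lt0r_neq0.
rewrite pair_sumE // -mulrA; apply: ler_pM => //.
- by rewrite mulr_ge0 ?ltW.
- by rewrite divr_ge0 ?exprn_ge0 ?ltW ?power_sum_gt0.
- exact: power_sum_ratio_le.
Qed.

End Decay.

Unset Implicit Arguments.
Section Asymptotics.
Variables (R : realType) (delta : R) (nL nR : nat -> nat).
Variables (wL : forall N, 'I_(nL N) -> R) (wR : forall N, 'I_(nR N) -> R).
Hypotheses (delta_gt0 : 0 < delta)
  (nR_unbounded : forall M : nat, exists N0 : nat, forall N, (N0 <= N)%N -> (M <= nR N)%N)
  (wL_gt0 : forall N i, 0 < wL N i) (wR_gt0 : forall N j, 0 < wR N j)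
  (assumption1 : forall N i j, wL N i * wR N j / ((nR N)%:R * moment (wR N) 1) <= 1).
Hypothesis max_weight : exists C : R, exists N0 : nat, 0 < C /\ forall N, (N0 <= N)%N ->
  (forall i, wL N i <= C * ((nR N)%:R `^ (1 / 2 - delta))) /\
  (forall j, wR N j <= C * ((nR N)%:R `^ (1 / 2 - delta))).
Hypothesis second_moment : exists C : R, exists N0 : nat, 0 < C /\ forall N, (N0 <= N)%N ->
  moment (wR N) 2 <= C * moment (wR N) 1 ^+ 2.

Lemma pair_sums_vanish (eta : R) : 0 < eta -> exists N0 : nat, forall N, (N0 <= N)%N ->
  (0 < nR N)%N /\ forall v v' : 'I_(nL N),
  \sum_z edge_prob (wL N) (wR N) (v, z) * edge_prob (wL N) (wR N) (v', z) <= eta ^+ 2.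
Proof.
move=> eta0; have [C [N1 [C0 hC]]] := max_weight; have [C2 [N2 [C20 hC2]]] := second_moment.
have [M hM] := powR_unbounded (d := 2 * delta) (Q := C ^+ 2 * C2 / eta ^+ 2)
  ltac:(by rewrite mulr_gt0) ltac:(by rewrite divr_gt0 ?mulr_gt0 ?exprn_gt0).
have [N3 hN3] := nR_unbounded M.+1.
exists (maxn N1 (maxn N2 N3)) => N; rewrite !geq_max => /and3P[h1 h2 h3].
have n_pos : (0 < nR N)%N by apply: leq_trans (hN3 N h3).
split=> // v v'.
apply: le_trans (pair_sum_decay n_pos (wL_gt0 N) (wR_gt0 N) (assumption1 N)
  (hC N h1).1 (hC2 N h2) v v') _.
have n_large := hM (nR N) (ltnW (hN3 N h3)).
rewrite ler_pdivrMr ?powR_gt0 ?ltr0n //.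
by move: n_large; rewrite ler_pdivrMr ?exprn_gt0 // [X in _ <= X]mulrC.
Qed.

End Asymptotics.
Arguments pair_sums_vanish {R delta nL nR wL wR}.

(* Theorem 9: eventually every pair sum is below eta^2 for eta = min (e/6, 1/8),
   and the fixed-size estimate then bounds the error by 6 eta <= e. *)
Theorem mainTheorem9 (R : realType) (delta : R)
  (nL nR : nat -> nat)
  (wL : forall N : nat, 'I_(nL N) -> R) (wR : forall N : nat, 'I_(nR N) -> R)
  (u u1 u2 : forall N : nat, 'I_(nL N)) :
  (* delta > 1/10 *)
  1 / 10 < delta ->
  (* n_L, n_R -> oo *)
  (forall M : nat, exists N0 : nat, forall N : nat, (N0 <= N)%N -> (M <= nL N)%N) ->
  (forall M : nat, exists N0 : nat, forall N : nat, (N0 <= N)%N -> (M <= nR N)%N) ->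
  (* weights are positive reals *)
  (forall N (i : 'I_(nL N)), 0 < wL N i) ->
  (forall N (j : 'I_(nR N)), 0 < wR N j) ->
  (* Assumption 1 *)
  (forall N (i : 'I_(nL N)) (j : 'I_(nR N)),
     wL N i * wR N j / ((nR N)%:R * moment (wR N) 1) <= 1) ->
  (* Assumption 2: max (S_L u S_R) = O(n_R^(1/2 - delta)) *)
  (exists C : R, exists N0 : nat, 0 < C /\ forall N : nat, (N0 <= N)%N ->
     (forall i : 'I_(nL N), wL N i <= C * ((nR N)%:R `^ (1 / 2 - delta))) /\
     (forall j : 'I_(nR N), wR N j <= C * ((nR N)%:R `^ (1 / 2 - delta)))) ->
  (* min S_L = Omega(1) *)
  (exists c : R, exists N0 : nat, 0 < c /\ forall N : nat, (N0 <= N)%N ->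
     forall i : 'I_(nL N), c <= wL N i) ->
  (* M_R2 = O(M_R1^2) *)
  (exists C : R, exists N0 : nat, 0 < C /\ forall N : nat, (N0 <= N)%N ->
     moment (wR N) 2 <= C * moment (wR N) 1 ^+ 2) ->
  (* M_R4 = O(n_R^(1 - 2 delta)) *)
  (exists C : R, exists N0 : nat, 0 < C /\ forall N : nat, (N0 <= N)%N ->
     moment (wR N) 4 <= C * ((nR N)%:R `^ (1 - 2 * delta))) ->
  (* u, u1, u2 distinct *)
  (forall N, u N != u1 N /\ u N != u2 N /\ u1 N != u2 N) ->
  (fun N : nat =>
     cond_prob (wL N) (wR N)
       (fun g => proj_edge g (u1 N) (u2 N))
       (fun g => proj_edge g (u N) (u1 N) && proj_edge g (u N) (u2 N))
     - (1 + moment (wR N) 2 ^+ 2 / (moment (wR N) 3 * moment (wR N) 1) * wL N (u N))^-1)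
  @ \oo --> (0 : R).
Proof.
move=> delta_gt _ hR wL_gt0 wR_gt0 assumption1 max_weight _ second_moment _ distinct.
have delta_gt0 : 0 < delta by lra.
apply/cvgrPdist_le => e e0.
pose eta := Num.min (e / 6) (1 / 8).
have eta0 : 0 < eta by rewrite lt_min; apply/andP; split; lra.
have eta_le : eta <= 1 / 8 by rewrite /eta ge_min lexx orbT.
have eta_e : 6 * eta <= e.
  have : eta <= e / 6 by rewrite /eta ge_min lexx.
  lra.
have [N0 small] := pair_sums_vanish delta_gt0 hR wL_gt0 wR_gt0 assumption1
  max_weight second_moment eta eta0.
exists N0 => // N /small [nR_pos pair_small]; rewrite sub0r normrN.
have [hu1 [hu2 hu12]] := distinct N.
apply: le_trans _ eta_e.
exact: (fixed_size_bound nR_pos (wL_gt0 N) (wR_gt0 N) (assumption1 N) hu1 hu2 hu12 eta0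
  eta_le pair_small).
Qed.
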